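(* Let $\alpha:\mathbb Z_+\times\mathbb Z_+\to\mathbb R$ be defined by $\alpha(0,s)=0$ for all $s\in\mathbb Z_+$ and, for $n\in\mathbb Z_+$, \[ \alpha(n+1,0)=\frac2{N^2}+\alpha(n,0)+\frac2{N^2}\sum_{s=1}^\infty\alpha(n,s)\mathrm{tr}(Q^s),\qquad \alpha(n+1,1)=-\frac2{N^2}+\frac{N-2}N\alpha(n,1)-\frac2{N^2}\sum_{s=1}^\infty\alpha(n,s)\mathrm{tr}(Q^s), \] \[ \alpha(n+1,s)=\frac{N-2}N\alpha(n,s)+\frac2N\alpha(n,s-1),\quad s\ge2 \] (so $\alpha(n,s)=0$ for $s\ge n+1$ and all sums are finite). Then \[ L_0^n(J)=J+\sum_{s=0}^\infty\alpha(n,s)Q^s\qquad\text{for all }n\in\mathbb Z_+. \] Moreover, if $Q$ is walk-regular, then $L^n(J)=L_0^n(J)=J+\sum_{s=0}^\infty\alpha(n,s)Q^s$ for all $n\in\mathbb N$.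
   Context: $E$ is a finite set with $N=\#E>8$ elements, listed in a fixed order; $\mathsf M_E$ is the space of complex $N\times N$ matrices indexed by $E\times E$. $|x\rangle$ (resp. $\langle x|$) is the column (resp. row) vector with 1 in coordinate $x$ and 0 elsewhere; $C^*$ denotes transpose. $Q$ is an irreducible stochastic matrix on $E$ with $Q(x,y)=Q(y,x)$ for all $x,y$ and $\mathrm{tr}(Q)=0$. $I$ is the identity and $J$ the matrix with all entries $1/N$. $Q$ is walk-regular if $Q^s(x,x)$ does not depend on $x\in E$ for every $s\in\mathbb Z_+$. Let $(U,V)$ be a random pair in $E\times E$ with $\mathbb P(U=x,V=y)=\frac1NQ(x,y)$ and $T=I-|U\rangle\langle U|+|U\rangle\langle V|$; the linear operator $L:\mathsf M_E\to\mathsf M_E$ is $L(C)=\mathbb E[T^*CT]$. The linear operator $L_0:\mathsf M_E\to\mathsf M_E$ is \[ L_0(C)=\frac{N-2}NC+\frac1N(CQ+QC)-\frac{2\,\mathrm{tr}(C)}{N^2}Q+\frac{2\,\mathrm{tr}(C)}{N^2}I. \] Powers $L^n$, $L_0^n$ denote $n$-fold composition ($L^0=L_0^0=$ identity). *)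

(* Complex matrices are modelled over an arbitrary
   numClosedFieldType C (e.g. the complex numbers); E = 'I_N. *)
From HB Require Import structures.
From mathcomp Require Import all_boot all_order all_algebra.
Set Implicit Arguments. Unset Strict Implicit. Unset Printing Implicit Defensive.
Import Order.TTheory GRing.Theory Num.Theory.
Local Open Scope ring_scope.

Section Defs.
Variables (C : numClosedFieldType) (N : nat).

Definition stochastic (Q : 'M[C]_N) : Prop :=
  (forall x y, 0 <= Q x y) /\ (forall x, \sum_y Q x y = 1).

Definition symmetric_mx (Q : 'M[C]_N) : Prop := forall x y, Q x y = Q y x.

Definition irreducible_mx (Q : 'M[C]_N) : Prop :=
  forall x y, exists n : nat, 0 < (Q ^+ n) x y.

Definition walk_regular (Q : 'M[C]_N) : Prop :=
  forall (s : nat) (x y : 'I_N), (Q ^+ s) x x = (Q ^+ s) y y.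

Definition Jmx : 'M[C]_N := const_mx (N%:R^-1).

Definition Tmx (x y : 'I_N) : 'M[C]_N :=
  1%:M - delta_mx x x + delta_mx x y.

(* L(C) = E[T^* C T], with P(U=x,V=y) = Q(x,y)/N and ^* = transpose *)
Definition Lop (Q : 'M[C]_N) (A : 'M[C]_N) : 'M[C]_N :=
  \sum_(x < N) \sum_(y < N) (N%:R^-1 * Q x y) *: ((Tmx x y)^T *m A *m Tmx x y).

Definition L0op (Q : 'M[C]_N) (A : 'M[C]_N) : 'M[C]_N :=
  ((N%:R - 2) / N%:R) *: A + N%:R^-1 *: (A *m Q + Q *m A)
  - (2 * \tr A / (N%:R ^+ 2)) *: Q + (2 * \tr A / (N%:R ^+ 2)) *: 1%:M.

(* alpha(n,s); the sums over s >= 1 are truncated at s = n, beyond which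
   alpha(n,s) = 0 (this vanishing is part of the theorem's conclusion). *)
Fixpoint alpha (Q : 'M[C]_N) (n : nat) : nat -> C :=
  match n with
  | 0 => fun _ => 0
  | n'.+1 => fun s =>
    let S := \sum_(1 <= t < n'.+1) alpha Q n' t * \tr (Q ^+ t) in
    match s with
    | 0 => 2 / (N%:R ^+ 2) + alpha Q n' 0 + 2 / (N%:R ^+ 2) * S
    | 1 => - (2 / (N%:R ^+ 2)) + (N%:R - 2) / N%:R * alpha Q n' 1
           - 2 / (N%:R ^+ 2) * S
    | s'.+1 => (N%:R - 2) / N%:R * alpha Q n' s'.+1 + 2 / N%:R * alpha Q n' s'
    end
  end.

End Defs.

From HB Require Import structures.
From mathcomp Require Import all_boot all_order all_algebra.
From mathcomp Require Import ring.
Set Implicit Arguments. Unset Strict Implicit. Unset Printing Implicit Defensive.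
Import Order.TTheory GRing.Theory Num.Theory.
Local Open Scope ring_scope.

(* Write T = 1 + K with K = e_x (e_y - e_x)^T.  Then T^T A T = A + A K + K^T A
   + A_xx K^T K, and averaging over (x, y) with weights Q(x, y)/N gives
   L(A) = L_0(A) as soon as the diagonal of A is constant.  On the other side,
   L_0 maps J + p(Q) to J + p'(Q) for every polynomial p, and the recursion
   defining alpha is the coefficientwise form of p |-> p'; hence
   L_0^n(J) = J + alpha_n(Q).  When Q is walk-regular every polynomial in Q has
   constant diagonal, so L and L_0 agree along the orbit of J. *)

Lemma delta_mx_mulmx_delta (R : pzSemiRingType) m n p q
    (a : 'I_m) (b : 'I_n) (c : 'I_p) (d : 'I_q) (A : 'M[R]_(n, p)) :
  delta_mx a b *m A *m delta_mx c d = A b c *: delta_mx a d.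
Proof.
apply/matrixP => i j; rewrite !mxE (bigD1 c) //= big1 ?addr0; last first.
  by move=> k /negbTE kc; rewrite !mxE kc /= mulr0.
rewrite mxE (bigD1 b) //= big1 ?addr0; last first.
  by move=> k /negbTE kb; rewrite !mxE kb andbF mul0r.
rewrite !mxE !eqxx !andbT.
by case: (i == a); case: (j == d); rewrite /= ?mulr1 ?mul1r ?mulr0 ?mul0r.
Qed.

Definition jump_mx (R : pzRingType) n (x y : 'I_n) : 'M[R]_n :=
  delta_mx x y - delta_mx x x.
Arguments jump_mx {R n}.

Lemma jump_mx_sandwich (R : pzRingType) n (x y : 'I_n) (A : 'M[R]_n) :
  (jump_mx x y)^T *m A *m jump_mx x y = A x x *: ((jump_mx x y)^T *m jump_mx x y).
Proof.
rewrite /jump_mx linearB /= !trmx_delta !mulmxBl !mulmxBr.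
by rewrite !delta_mx_mulmx_delta !mul_delta_mx !scalerBr.
Qed.

Section TransitionConjugation.
Variables (C : numClosedFieldType) (N : nat).
Implicit Types (x y : 'I_N) (A : 'M[C]_N).

Lemma Tmx_jump x y : Tmx C x y = 1%:M + jump_mx x y.
Proof. by rewrite /Tmx /jump_mx addrAC -addrA. Qed.

Lemma trTmx_mul_Tmx x y A :
  (Tmx C x y)^T *m A *m Tmx C x y =
  A + A *m jump_mx x y + (jump_mx x y)^T *m A
    + A x x *: ((jump_mx x y)^T *m jump_mx x y).
Proof.
rewrite Tmx_jump [_^T]raddfD /= trmx1 mulmxDl mul1mx mulmxDr mulmx1.
by rewrite [(A + _) *m _]mulmxDl jump_mx_sandwich addrA [A + _ + _]addrAC.
Qed.

End TransitionConjugation.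

Section WeightedJumps.
Variables (R : comPzRingType) (n : nat) (Q : 'M[R]_n).
Hypotheses (Qsym : Q^T = Q) (Qrow : forall x, \sum_y Q x y = 1).
(* N times the expectation over (U, V). *)
Local Notation "\E_ p F" := (\sum_(p : 'I_n * 'I_n) Q p.1 p.2 *: F)
  (at level 41, p name, F at level 41).

Lemma sum_weights : \sum_(p : 'I_n * 'I_n) Q p.1 p.2 = n%:R.
Proof.
rewrite -(pair_big xpredT xpredT); under eq_bigr do rewrite Qrow.
by rewrite sumr_const card_ord.
Qed.

Lemma sum_weighted_delta_diag : \E_p delta_mx p.1 p.1 = 1%:M.
Proof.
rewrite -(pair_big xpredT xpredT (fun x y => Q x y *: delta_mx x x)) /=.
by rewrite scalar_mx_sum_delta; apply: eq_bigr => x _; rewrite -scaler_suml Qrow.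
Qed.

Lemma sum_weighted_delta : \E_p delta_mx p.1 p.2 = Q.
Proof.
rewrite -(pair_big xpredT xpredT (fun x y => Q x y *: delta_mx x y)).
by rewrite -matrix_sum_delta.
Qed.

Lemma sum_weighted_jump : \E_p jump_mx p.1 p.2 = Q - 1%:M.
Proof.
under eq_bigr do rewrite scalerBr.
by rewrite sumrB sum_weighted_delta sum_weighted_delta_diag.
Qed.

Lemma sum_weighted_delta_tr : \E_p delta_mx p.2 p.1 = Q.
Proof.
rewrite -[RHS]Qsym -[in RHS]sum_weighted_delta raddf_sum.
by apply: eq_bigr => p _ /=; rewrite linearZ /= trmx_delta.
Qed.

Lemma sum_weighted_delta_diag_tr : \E_p delta_mx p.2 p.2 = 1%:M.
Proof.
rewrite -(pair_big xpredT xpredT (fun x y => Q x y *: delta_mx y y)).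
rewrite exchange_big /=.
rewrite scalar_mx_sum_delta; apply: eq_bigr => y _; rewrite -scaler_suml.
have Qsym_at x : Q x y = Q y x by rewrite -{1}Qsym mxE.
by under eq_bigr => x _ do rewrite Qsym_at; rewrite Qrow.
Qed.

Lemma sum_weighted_jump_tr : \E_p (jump_mx p.1 p.2)^T = Q - 1%:M.
Proof.
under eq_bigr do rewrite /jump_mx [_^T]raddfB /= !trmx_delta scalerBr.
by rewrite sumrB sum_weighted_delta_tr sum_weighted_delta_diag.
Qed.

Lemma sum_weighted_jump_square :
  \E_p ((jump_mx p.1 p.2)^T *m jump_mx p.1 p.2) = (1%:M - Q) *+ 2.
Proof.
under eq_bigr do rewrite /jump_mx [_^T]raddfB /= !trmx_delta mulmxBl !mulmxBr
  !mul_delta_mx !scalerBr.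
rewrite !sumrB sum_weighted_delta_diag_tr sum_weighted_delta_tr.
by rewrite sum_weighted_delta sum_weighted_delta_diag opprB mulr2n.
Qed.

End WeightedJumps.

Section LopOnConstantDiagonal.
Variables (C : numClosedFieldType) (N : nat) (Q : 'M[C]_N).
Hypotheses (Qsym : Q^T = Q) (Qrow : forall x, \sum_y Q x y = 1).
Hypothesis N_neq0 : N%:R != 0 :> C.

Lemma Lop_eq_L0op (A : 'M[C]_N) (a : C) :
  (forall x, A x x = a) -> Lop Q A = L0op Q A.
Proof.
move=> Adiag.
have trA : \tr A = N%:R * a.
  rewrite /mxtrace; under eq_bigr do rewrite Adiag.
  by rewrite sumr_const card_ord mulr_natl.
rewrite /Lop pair_big /=.
under eq_bigr => p _ do rewrite -scalerA trTmx_mul_Tmx Adiag.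
rewrite -scaler_sumr.
have scalerC (b c : C) (M : 'M[C]_N) : b *: (c *: M) = c *: (b *: M).
  by rewrite !scalerA mulrC.
under eq_bigr => p _ do
  rewrite !scalerDr scalemxAr scalemxAl [_ *: (a *: _)]scalerC.
rewrite !big_split /= -scaler_suml -mulmx_sumr -mulmx_suml -scaler_sumr.
rewrite sum_weights // sum_weighted_jump // sum_weighted_jump_tr //.
rewrite sum_weighted_jump_square // /L0op trA mulmxBr mulmxBl mulmx1 mul1mx.
move: (A *m Q) (Q *m A) => AQ QA.
apply/matrixP => i j; rewrite !mxE.
by field.
Qed.

End LopOnConstantDiagonal.

Section L0opOnJ.
Variables (C : numClosedFieldType) (N : nat) (Q : 'M[C]_N).
Hypotheses (Qsym : Q^T = Q) (Qrow : forall x, \sum_y Q x y = 1).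
Hypothesis N_neq0 : N%:R != 0 :> C.
Local Notation J := (Jmx C N).

Lemma mulmx_Jmx : Q *m J = J.
Proof.
apply/matrixP => i j; rewrite !mxE; under eq_bigr do rewrite mxE.
by rewrite -mulr_suml Qrow mul1r.
Qed.

Lemma Jmx_mulmx : J *m Q = J.
Proof. by rewrite -[Q]Qsym -[J]trmx_const -trmx_mul mulmx_Jmx trmx_const. Qed.

Lemma mxtrace_Jmx : \tr J = 1.
Proof.
rewrite /mxtrace; under eq_bigr do rewrite mxE.
by rewrite sumr_const card_ord -[_ *+ N]mulr_natr mulVf.
Qed.

Lemma L0op_Jmx_add (A : 'M[C]_N) : A *m Q = Q *m A ->
  L0op Q (J + A) = J + ((N%:R - 2) / N%:R) *: A + (2 / N%:R) *: (A *m Q)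
                   + (2 / N%:R ^+ 2 * (1 + \tr A)) *: (1%:M - Q).
Proof.
move=> AQ; rewrite /L0op mxtraceD mxtrace_Jmx mulmxDl mulmxDr.
rewrite Jmx_mulmx mulmx_Jmx -AQ.
move: (A *m Q) (\tr A) => B t.
by apply/matrixP => i j; rewrite !mxE; field.
Qed.

End L0opOnJ.

Section AlphaPolynomial.
Variables (C : numClosedFieldType) (N : nat) (Q : 'M[C]_N).

Lemma alpha_eq0 n s : (n < s)%N -> alpha Q n s = 0.
Proof.
elim: n s => [|n IHn] [|[|s]] //= lt_ns.
by rewrite !IHn ?mulr0 ?addr0 // ltnW.
Qed.

Definition alpha_poly n : {poly C} := \poly_(s < n.+1) alpha Q n s.

Lemma coef_alpha_poly n s : (alpha_poly n)`_s = alpha Q n s.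
Proof.
rewrite coef_poly; case: ltnP => // le_ns.
by rewrite alpha_eq0.
Qed.

Lemma alpha_polyS n : N%:R != 0 :> C ->
  alpha_poly n.+1 =
    ((N%:R - 2) / N%:R) *: alpha_poly n + (2 / N%:R) *: (alpha_poly n * 'X)
    + (2 / N%:R ^+ 2 * (1 + \sum_(0 <= s < n.+1) alpha Q n s * \tr (Q ^+ s)))
      *: (1 - 'X).
Proof.
move=> N_neq0; rewrite big_ltn // expr0 mxtrace1.
apply/polyP => s.
rewrite !(coefD, coefZ, coefMX, coefB, coefN, coef1, coefX, coef_alpha_poly).
by case: s => [|[|s]] /=; field.
Qed.

End AlphaPolynomial.

Lemma horner_mx_poly (R : comNzRingType) n (A : 'M[R]_n.+1) m (a : nat -> R) :
  horner_mx A (\poly_(i < m) a i) = \sum_(0 <= i < m) a i *: A ^+ i.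
Proof.
rewrite poly_def rmorph_sum big_mkord; apply: eq_bigr => i _.
by rewrite /= horner_mxZ rmorphXn /= horner_mx_X.
Qed.

Section Iterates.
Variables (C : numClosedFieldType) (n : nat) (Q : 'M[C]_n.+1).
Hypotheses (Qsym : Q^T = Q) (Qrow : forall x, \sum_y Q x y = 1).
Local Notation J := (Jmx C n.+1).

Let N_neq0 : n.+1%:R != 0 :> C. Proof. by rewrite pnatr_eq0. Qed.

Lemma iter_L0op_Jmx k : iter k (L0op Q) J = J + horner_mx Q (alpha_poly Q k).
Proof.
elim: k => [|k IHk].
  have -> : alpha_poly Q 0 = 0 by apply/polyP => s; rewrite coef_alpha_poly coef0.
  by rewrite rmorph0 addr0.
have trH : \tr (horner_mx Q (alpha_poly Q k)) =
           \sum_(0 <= s < k.+1) alpha Q k s * \tr (Q ^+ s).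
  by rewrite horner_mx_poly raddf_sum; apply: eq_bigr => s _ /=; rewrite mxtraceZ.
rewrite iterS IHk L0op_Jmx_add //; last exact: comm_horner_mx.
rewrite trH (alpha_polyS _ _ N_neq0) !rmorphD /= !horner_mxZ rmorphM rmorphB /=.
by rewrite !horner_mx_X (rmorph1 (horner_mx Q)) !addrA.
Qed.

Lemma iter_Lop_Jmx k : walk_regular Q -> iter k (Lop Q) J = iter k (L0op Q) J.
Proof.
move=> Qwalk; elim: k => [//|k IHk].
rewrite !iterS IHk iter_L0op_Jmx.
set A := J + horner_mx Q (alpha_poly Q k).
apply: (Lop_eq_L0op Qsym Qrow N_neq0 (a := A ord0 ord0)).
move=> x; rewrite /A horner_mx_poly !mxE !summxE; congr (_ + _).
by apply: eq_bigr => s _; rewrite !mxE (Qwalk s x ord0).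
Qed.

End Iterates.

Theorem lemma3p1 (C : numClosedFieldType) (N : nat) (Q : 'M[C]_N) :
  (8 < N)%N ->
  irreducible_mx Q -> stochastic Q -> symmetric_mx Q -> \tr Q = 0 ->
  (forall n s : nat, (n < s)%N -> alpha Q n s = 0) /\
  (forall n : nat,
     iter n (L0op Q) (Jmx C N) =
     Jmx C N + \sum_(0 <= s < n.+1) alpha Q n s *: Q ^+ s) /\
  (walk_regular Q ->
   forall n : nat,
     iter n (Lop Q) (Jmx C N) = iter n (L0op Q) (Jmx C N) /\
     iter n (Lop Q) (Jmx C N) =
     Jmx C N + \sum_(0 <= s < n.+1) alpha Q n s *: Q ^+ s).
Proof.
move=> lt8N _ [_ Qrow] Qsym_at _.
split; first exact: alpha_eq0.
(* [horner_mx] needs a matrix size of the form n.+1. *)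
case: N lt8N Q Qrow Qsym_at => // n _ Q Qrow Qsym_at.
have Qsym : Q^T = Q by apply/matrixP => x y; rewrite mxE Qsym_at.
have L0E k : iter k (L0op Q) (Jmx C n.+1) =
             Jmx C n.+1 + \sum_(0 <= s < k.+1) alpha Q k s *: Q ^+ s.
  by rewrite iter_L0op_Jmx // horner_mx_poly.
split=> // Qwalk k.
by rewrite iter_Lop_Jmx.
Qed.
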